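(* Let $\{q_k:k\ge0\}$ be a non-decreasing sequence of nonnegative numbers with $q_0>0$ satisfying $\frac{q_{n-1}}{Q_n}=O(1/n)$ as $n\to\infty$. Then there is a constant $c>0$ such that for all $n\in\mathbb N_+$ and all $x\in G_m$, $$|F_n(x)|\le \frac{c}{n}\sum_{j=0}^{|n|}M_j\,|K_{M_j}(x)|.$$
   Context: Let $m=(m_0,m_1,\dots)$ be a bounded sequence of integers $m_k\ge 2$; $G_m=\prod_k Z_{m_k}$ with Haar probability measure $\mu$; $M_0=1$, $M_{k+1}=m_kM_k$, $n=\sum_j n_jM_j$ with $n_j\in Z_{m_j}$. $r_k(x)=\exp(2\pi i x_k/m_k)$, $\psi_n=\prod_k r_k^{n_k}$, $D_n=\sum_{k=0}^{n-1}\psi_k$. The Fejér kernel is $K_n=\frac1n\sum_{k=1}^nD_k$. $Q_n=\sum_{k=0}^{n-1}q_k$ and the Nörlund kernel is $F_n=\frac1{Q_n}\sum_{k=1}^nq_{n-k}D_k$. For $n\in\mathbb N_+$, $|n|$ denotes the unique integer with $M_{|n|}\le n<M_{|n|+1}$. *)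

From Stdlib Require Import Reals Lra Lia.
Open Scope R_scope.

Definition C : Type := (R * R)%type.
Definition C0 : C := (0, 0).
Definition C1 : C := (1, 0).
Definition Cadd (z w : C) : C := (fst z + fst w, snd z + snd w).
Definition Cmul (z w : C) : C :=
  (fst z * fst w - snd z * snd w, fst z * snd w + snd z * fst w).
Definition Cscal (r : R) (z : C) : C := (r * fst z, r * snd z).
Definition Cnorm (z : C) : R := sqrt (fst z * fst z + snd z * snd z).
Fixpoint Cpow (z : C) (n : nat) : C :=
  match n with O => C1 | S n => Cmul (Cpow z n) z end.
Fixpoint Csum (f : nat -> C) (n : nat) : C :=
  match n with O => C0 | S n => Cadd (Csum f n) (f n) end.
Fixpoint Cprod (f : nat -> C) (n : nat) : C :=
  match n with O => C1 | S n => Cmul (Cprod f n) (f n) end.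
Fixpoint Rsum (f : nat -> R) (n : nat) : R :=
  match n with O => 0 | S n => Rsum f n + f n end.

Fixpoint Mseq (m : nat -> nat) (k : nat) : nat :=
  match k with O => 1%nat | S k => (m k * Mseq m k)%nat end.

(* n_j : the j-th digit of n in the mixed radix expansion n = sum n_j M_j *)
Definition digit (m : nat -> nat) (n j : nat) : nat :=
  Nat.modulo (Nat.div n (Mseq m j)) (m j).

Definition inGm (m : nat -> nat) (x : nat -> nat) : Prop :=
  forall k, (x k < m k)%nat.

Definition rchar (m : nat -> nat) (k : nat) (x : nat -> nat) : C :=
  (cos (2 * PI * INR (x k) / INR (m k)), sin (2 * PI * INR (x k) / INR (m k))).

(* psi_n = prod_k r_k^{n_k}; digits n_k vanish for k > n (as m_k >= 2),
   so the product over k < n+1 is the full product. *)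
Definition psi (m : nat -> nat) (n : nat) (x : nat -> nat) : C :=
  Cprod (fun k => Cpow (rchar m k x) (digit m n k)) (S n).

Definition Dir (m : nat -> nat) (n : nat) (x : nat -> nat) : C :=
  Csum (fun k => psi m k x) n.

Definition Fejer (m : nat -> nat) (n : nat) (x : nat -> nat) : C :=
  Cscal (/ INR n) (Csum (fun k => Dir m (S k) x) n).

Definition Qs (q : nat -> R) (n : nat) : R := Rsum q n.

Definition Norlund (m : nat -> nat) (q : nat -> R) (n : nat) (x : nat -> nat) : C :=
  Cscal (/ Qs q n) (Csum (fun k => Cscal (q (n - S k)%nat) (Dir m (S k) x)) n).

(* Write n = a M_N + b with a < m_N and b < M_N.  Since psi_(a M_N + b) = psi_b r_N^a,
   D_n = (1 + r_N + ... + r_N^(a-1)) D_(M_N) + r_N^a D_b, and summing over n gives a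
   decomposition of n K_n = D_1 + ... + D_n of the same shape.  The kernel D_(M_N)(x)
   vanishes unless x_0 = ... = x_(N-1) = 0, in which case D_j(x) = j for j <= M_N; either
   way M_N |D_(M_N)| <= 2 M_N |K_(M_N)|.  As the m_k are bounded by B, this gives
   |n K_n| <= (2B^2 + 3B) M_N |K_(M_N)| + |b K_b|, hence by induction on N
   |j K_j| <= (2B^2 + 3B) sum_(l <= N) M_l |K_(M_l)| for all j < M_(N+1).
   Abel summation against the non-increasing weights q_(n-1), ..., q_0 bounds |Q_n F_n|
   by q_(n-1) times this quantity, and q_(n-1) / Q_n = O(1/n). *)

From Pilot Require Import Defs.
From Stdlib Require Import Reals Lra Lia.
From Coquelicot Require Complex.
Open Scope R_scope.

(* Coquelicot's [Copp] and [Cminus], but typed over [Defs.C]: [ring] reads the carrier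
   off the types, so the ring below must be registered at [Defs.C] itself. *)
Definition Copp (z : Defs.C) : Defs.C := (- fst z, - snd z).

Definition Csub (z w : Defs.C) : Defs.C := Cadd z (Copp w).

Lemma C_ring_theory : ring_theory Defs.C0 Defs.C1 Cadd Cmul Csub Copp (@eq Defs.C).
Proof. exact Complex.C_ring_theory. Qed.

Add Ring C_ring : C_ring_theory.

Lemma Cscal_Cmul r z : Cscal r z = Cmul (Complex.RtoC r) z.
Proof. unfold Cscal, Cmul, Complex.RtoC; simpl; f_equal; ring. Qed.

Lemma RtoC_0 : Complex.RtoC 0 = Defs.C0.
Proof. reflexivity. Qed.

Lemma RtoC_1 : Complex.RtoC 1 = Defs.C1.
Proof. reflexivity. Qed.

Lemma RtoC_add r s : Complex.RtoC (r + s) = Cadd (Complex.RtoC r) (Complex.RtoC s).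
Proof. apply Complex.RtoC_plus. Qed.

Lemma RtoC_sub r s : Complex.RtoC (r - s) = Csub (Complex.RtoC r) (Complex.RtoC s).
Proof. apply Complex.RtoC_minus. Qed.

Ltac Cring := rewrite ?Cscal_Cmul, ?RtoC_add, ?RtoC_sub, ?RtoC_0, ?RtoC_1; ring.

Lemma Cnorm_Cmod z : Cnorm z = Complex.Cmod z.
Proof. unfold Cnorm, Complex.Cmod; f_equal; ring. Qed.

Lemma Cnorm_ge0 z : 0 <= Cnorm z.
Proof. rewrite Cnorm_Cmod; apply Complex.Cmod_ge_0. Qed.

Lemma Cnorm_triangle z w : Cnorm (Cadd z w) <= Cnorm z + Cnorm w.
Proof. rewrite !Cnorm_Cmod; apply Complex.Cmod_triangle. Qed.

Lemma Cnorm_mul z w : Cnorm (Cmul z w) = Cnorm z * Cnorm w.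
Proof. rewrite !Cnorm_Cmod; apply Complex.Cmod_mult. Qed.

Lemma Cnorm_RtoC a : Cnorm (Complex.RtoC a) = Rabs a.
Proof. rewrite Cnorm_Cmod; apply Complex.Cmod_R. Qed.

Lemma Cnorm_scal r z : Cnorm (Cscal r z) = Rabs r * Cnorm z.
Proof. rewrite Cscal_Cmul, Cnorm_mul, Cnorm_RtoC; reflexivity. Qed.

Lemma Cnorm_C0 : Cnorm Defs.C0 = 0.
Proof. rewrite <- RtoC_0, Cnorm_RtoC; apply Rabs_R0. Qed.

Lemma Cnorm_Cpow_unit z n : Cnorm z = 1 -> Cnorm (Cpow z n) = 1.
Proof.
  intros Hz; induction n as [|n IH]; simpl.
  - rewrite <- RtoC_1, Cnorm_RtoC; apply Rabs_R1.
  - rewrite Cnorm_mul, IH, Hz; ring.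
Qed.

Lemma Cnorm_rchar m k x : Cnorm (rchar m k x) = 1.
Proof.
  unfold Cnorm, rchar; simpl; rewrite <- sqrt_1; f_equal.
  rewrite Rplus_comm; apply sin2_cos2.
Qed.

Lemma Cpow_C1 n : Cpow Defs.C1 n = Defs.C1.
Proof. induction n as [|n IH]; simpl; [reflexivity|]. rewrite IH; Cring. Qed.

Lemma Cpow_cos_sin t n : Cpow (cos t, sin t) n = (cos (INR n * t), sin (INR n * t)).
Proof.
  induction n as [|n IH]; simpl Cpow.
  - rewrite Rmult_0_l, cos_0, sin_0; reflexivity.
  - rewrite IH, S_INR, Rmult_plus_distr_r, Rmult_1_l, cos_plus, sin_plus.
    unfold Cmul; simpl; f_equal; ring.
Qed.

Lemma Csum_S f n : Csum f (S n) = Cadd (Csum f n) (f n).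
Proof. reflexivity. Qed.

Lemma Cprod_ext f g n : (forall k, (k < n)%nat -> f k = g k) -> Cprod f n = Cprod g n.
Proof.
  induction n as [|n IH]; intros H; simpl; [reflexivity|].
  f_equal; [apply IH; intros; apply H | apply H]; lia.
Qed.

Lemma Cprod_tail f L L' :
  (forall k, (Nat.min L L' <= k)%nat -> f k = Defs.C1) -> Cprod f L = Cprod f L'.
Proof.
  intros Hone.
  assert (Hstab : forall L1, (Nat.min L L' <= L1)%nat -> Cprod f L1 = Cprod f (Nat.min L L')).
  { induction 1 as [|L1 HL1 IH]; [reflexivity|].
    simpl; rewrite IH, (Hone L1 HL1); Cring. }
  rewrite (Hstab L), (Hstab L') by lia; reflexivity.
Qed.

Lemma Cnorm_Csum_le f n : Cnorm (Csum f n) <= Rsum (fun k => Cnorm (f k)) n.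
Proof.
  induction n as [|n IH]; simpl.
  - rewrite Cnorm_C0; lra.
  - eapply Rle_trans; [apply Cnorm_triangle|lra].
Qed.

Lemma Rsum_le f g n : (forall k, (k < n)%nat -> f k <= g k) -> Rsum f n <= Rsum g n.
Proof.
  induction n as [|n IH]; intros H; simpl; [lra|].
  pose proof (H n (Nat.lt_succ_diag_r n)).
  pose proof (IH (fun k Hk => H k (Nat.lt_lt_succ_r _ _ Hk))); lra.
Qed.

Lemma Rsum_telescope (w : nat -> R) A n :
  Rsum (fun k => (w k - w (S k)) * A) n = (w 0%nat - w n) * A.
Proof. induction n as [|n IH]; simpl; [ring|]. rewrite IH; ring. Qed.

(** * Abel summation *)

Lemma Csum_by_parts (w : nat -> R) (T d : nat -> Defs.C) n :
  T 0%nat = Defs.C0 -> (forall k, T (S k) = Cadd (T k) (d k)) ->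
  Csum (fun k => Cscal (w k) (d k)) (S n) =
  Cadd (Cscal (w n) (T (S n))) (Csum (fun k => Cscal (w k - w (S k)) (T (S k))) n).
Proof.
  intros HT0 HTS; induction n as [|n IH].
  - simpl; rewrite HTS, HT0; Cring.
  - rewrite Csum_S, IH, Csum_S, (HTS (S n)); Cring.
Qed.

Lemma Cnorm_abel_le (w : nat -> R) (T d : nat -> Defs.C) (A : R) n :
  (forall k, 0 <= w k) -> (forall k, w (S k) <= w k) ->
  T 0%nat = Defs.C0 -> (forall k, T (S k) = Cadd (T k) (d k)) ->
  (forall j, (j <= n)%nat -> Cnorm (T j) <= A) ->
  Cnorm (Csum (fun k => Cscal (w k) (d k)) n) <= w 0%nat * A.
Proof.
  intros Hw Hdec HT0 HTS HA.
  assert (HA0 : 0 <= A)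
    by (pose proof (HA 0%nat ltac:(lia)); pose proof (Cnorm_ge0 (T 0%nat)); lra).
  destruct n as [|n]; [simpl; rewrite Cnorm_C0; pose proof (Hw 0%nat); nra|].
  rewrite (Csum_by_parts w T d n HT0 HTS).
  eapply Rle_trans; [apply Cnorm_triangle|].
  eapply Rle_trans; [apply Rplus_le_compat_l, Cnorm_Csum_le|].
  eapply Rle_trans; [apply Rplus_le_compat_l, (Rsum_le _ (fun k => (w k - w (S k)) * A))|].
  - intros k Hk; rewrite Cnorm_scal, Rabs_right by (apply Rle_ge; pose proof (Hdec k); lra).
    apply Rmult_le_compat_l; [pose proof (Hdec k); lra | apply HA; lia].
  - rewrite Rsum_telescope, Cnorm_scal, Rabs_right by (apply Rle_ge, Hw).
    pose proof (HA (S n) ltac:(lia)); pose proof (Hw n); nra.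
Qed.

(** * Geometric sums *)

Definition Cgeom (r : Defs.C) (a : nat) : Defs.C := Csum (Cpow r) a.

Definition Cgeom_sum (r : Defs.C) (a : nat) : Defs.C := Csum (Cgeom r) a.

Lemma Cgeom_S r a : Cgeom r (S a) = Cadd (Cgeom r a) (Cpow r a).
Proof. reflexivity. Qed.

Lemma Cgeom_sum_S r a : Cgeom_sum r (S a) = Cadd (Cgeom_sum r a) (Cgeom r a).
Proof. reflexivity. Qed.

Lemma Cgeom_telescope r a : Cadd (Cmul (Cgeom r a) r) Defs.C1 = Cadd (Cgeom r a) (Cpow r a).
Proof.
  induction a as [|a IH]; [unfold Cgeom; simpl; Cring|].
  rewrite Cgeom_S; simpl Cpow.
  transitivity (Cadd (Cadd (Cmul (Cgeom r a) r) Defs.C1) (Cmul (Cpow r a) r)); [Cring|].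
  rewrite IH; Cring.
Qed.

Lemma Cgeom_root_of_unity r a : Cpow r a = Defs.C1 -> r <> Defs.C1 -> Cgeom r a = Defs.C0.
Proof.
  intros Hpow Hr.
  pose proof (Cgeom_telescope r a) as Htel; rewrite Hpow in Htel.
  destruct (Complex.Ceq_dec (Cgeom r a) Defs.C0) as [E|E]; [exact E|exfalso].
  apply (Complex.Cmult_neq_0 _ (Csub r Defs.C1) E).
  - exact (Complex.Cminus_eq_contra _ _ Hr).
  - change (Cmul (Cgeom r a) (Csub r Defs.C1) = Defs.C0).
    transitivity (Csub (Cadd (Cmul (Cgeom r a) r) Defs.C1) (Cadd (Cgeom r a) Defs.C1));
      [Cring|].
    rewrite Htel; Cring.
Qed.

Lemma Cnorm_Cgeom_le r a : Cnorm r = 1 -> Cnorm (Cgeom r a) <= INR a.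
Proof.
  intros Hr; induction a as [|a IH]; [unfold Cgeom; simpl; rewrite Cnorm_C0; lra|].
  rewrite Cgeom_S, S_INR.
  eapply Rle_trans; [apply Cnorm_triangle|].
  rewrite Cnorm_Cpow_unit by exact Hr; lra.
Qed.

Lemma Cnorm_Cgeom_sum_le r a : Cnorm r = 1 -> Cnorm (Cgeom_sum r a) <= INR a * INR a.
Proof.
  intros Hr; induction a as [|a IH]; [unfold Cgeom_sum; simpl; rewrite Cnorm_C0; lra|].
  rewrite Cgeom_sum_S, S_INR.
  eapply Rle_trans; [apply Cnorm_triangle|].
  pose proof (Cnorm_Cgeom_le r a Hr); pose proof (pos_INR a); nra.
Qed.

Lemma Cnorm_Cgeom_comb_le r a M b : Cnorm r = 1 -> (b <= M)%nat ->
  Cnorm (Cadd (Cscal (INR M) (Cgeom_sum r a)) (Cscal (INR b) (Cgeom r a)))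
    <= INR M * (INR a * INR a + INR a).
Proof.
  intros Hr HbM.
  pose proof (Cnorm_Cgeom_le r a Hr); pose proof (Cnorm_Cgeom_sum_le r a Hr).
  pose proof (pos_INR M); pose proof (pos_INR b); pose proof (Cnorm_ge0 (Cgeom r a)).
  pose proof (le_INR _ _ HbM).
  eapply Rle_trans; [apply Cnorm_triangle|].
  rewrite !Cnorm_scal, !Rabs_right by (apply Rle_ge, pos_INR).
  nra.
Qed.

(** * Dirichlet and Fejér kernels of a Vilenkin system *)

Definition Dir_sum (m : nat -> nat) (n : nat) (x : nat -> nat) : Defs.C :=
  Csum (fun k => Dir m (S k) x) n.

Lemma Dir_S m n x : Dir m (S n) x = Cadd (Dir m n x) (psi m n x).
Proof. reflexivity. Qed.

Lemma Dir_sum_S m n x : Dir_sum m (S n) x = Cadd (Dir_sum m n x) (Dir m (S n) x).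
Proof. reflexivity. Qed.

Lemma INR_mul_Cnorm_Fejer m n x : (0 < n)%nat ->
  INR n * Cnorm (Fejer m n x) = Cnorm (Dir_sum m n x).
Proof.
  intros Hn; assert (0 < INR n) by (apply lt_0_INR; exact Hn).
  unfold Fejer; rewrite Cnorm_scal, Rabs_right by (left; apply Rinv_0_lt_compat; lra).
  fold (Dir_sum m n x); field; lra.
Qed.

Section Vilenkin.

Variable m : nat -> nat.
Hypothesis hm2 : forall k, (2 <= m k)%nat.

Lemma Mseq_pos k : (0 < Mseq m k)%nat.
Proof. induction k as [|k IH]; simpl; [lia|]. pose proof (hm2 k); nia. Qed.

Lemma Mseq_gt k : (k < Mseq m k)%nat.
Proof. induction k as [|k IH]; simpl; [lia|]. pose proof (hm2 k); nia. Qed.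

Lemma Mseq_divide k l : (k <= l)%nat -> Nat.divide (Mseq m k) (Mseq m l).
Proof. induction 1; [apply Nat.divide_refl | simpl; now apply Nat.divide_mul_r]. Qed.

Lemma Mseq_mono k l : (k <= l)%nat -> (Mseq m k <= Mseq m l)%nat.
Proof. intros Hkl; apply Nat.divide_pos_le; [apply Mseq_pos | now apply Mseq_divide]. Qed.

Lemma digit_small n k : (n < Mseq m k)%nat -> digit m n k = 0%nat.
Proof. intros Hn; unfold digit; rewrite Nat.div_small by exact Hn; apply Nat.Div0.mod_0_l. Qed.

Lemma digit_low a b k N : (k < N)%nat -> digit m (a * Mseq m N + b) k = digit m b k.
Proof.
  intros HkN; unfold digit.
  destruct (Mseq_divide (S k) N HkN) as [P ->]; simpl.
  pose proof (Mseq_pos k).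
  replace (a * (P * (m k * Mseq m k)) + b)%nat with (b + a * P * m k * Mseq m k)%nat by ring.
  rewrite Nat.div_add by lia; apply Nat.Div0.mod_add.
Qed.

Lemma digit_top a b N : (a < m N)%nat -> (b < Mseq m N)%nat -> digit m (a * Mseq m N + b) N = a.
Proof.
  intros Ha Hb; unfold digit; pose proof (Mseq_pos N).
  rewrite Nat.add_comm, Nat.div_add, Nat.div_small by lia.
  now apply Nat.mod_small.
Qed.

Definition psi_factor n x k := Cpow (rchar m k x) (digit m n k).

Lemma psi_as_Cprod n x L : (n < Mseq m L)%nat -> psi m n x = Cprod (psi_factor n x) L.
Proof.
  intros HnL; apply Cprod_tail; intros k Hk.
  unfold psi_factor; rewrite digit_small; [reflexivity|].
  destruct (Nat.min_spec (S n) L) as [[_ E] | [_ E]]; rewrite E in Hk.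
  - pose proof (Mseq_gt k); lia.
  - pose proof (Mseq_mono L k Hk); lia.
Qed.

Variable x : nat -> nat.

Lemma psi_split a b N : (a < m N)%nat -> (b < Mseq m N)%nat ->
  psi m (a * Mseq m N + b) x = Cmul (psi m b x) (Cpow (rchar m N x) a).
Proof.
  intros Ha Hb.
  rewrite (psi_as_Cprod _ x (S N)), (psi_as_Cprod b x N) by (simpl; nia).
  cbn [Cprod]; f_equal.
  - apply Cprod_ext; intros k Hk; unfold psi_factor; now rewrite digit_low.
  - unfold psi_factor; now rewrite digit_top.
Qed.

Lemma Dir_split N a b : (a < m N)%nat -> (b <= Mseq m N)%nat ->
  Dir m (a * Mseq m N + b) x =
  Cadd (Cmul (Cgeom (rchar m N x) a) (Dir m (Mseq m N) x))
       (Cmul (Cpow (rchar m N x) a) (Dir m b x)).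
Proof.
  revert b; induction a as [|a IHa]; intros b Ha Hb.
  - unfold Cgeom; simpl; Cring.
  - induction b as [|b IHb].
    + replace (S a * Mseq m N + 0)%nat with (a * Mseq m N + Mseq m N)%nat by ring.
      rewrite IHa, Cgeom_S by lia; simpl Cpow; change (Dir m 0 x) with Defs.C0; Cring.
    + replace (S a * Mseq m N + S b)%nat with (S (S a * Mseq m N + b)) by ring.
      rewrite Dir_S, IHb, psi_split, (Dir_S m b) by lia; Cring.
Qed.

Lemma Dir_sum_split N a b : (a < m N)%nat -> (b <= Mseq m N)%nat ->
  Dir_sum m (a * Mseq m N + b) x =
  Cadd (Cadd (Cmul (Cadd (Cscal (INR (Mseq m N)) (Cgeom_sum (rchar m N x) a))
                         (Cscal (INR b) (Cgeom (rchar m N x) a)))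
                   (Dir m (Mseq m N) x))
             (Cmul (Cgeom (rchar m N x) a) (Dir_sum m (Mseq m N) x)))
       (Cmul (Cpow (rchar m N x) a) (Dir_sum m b x)).
Proof.
  revert b; induction a as [|a IHa]; intros b Ha Hb.
  - unfold Cgeom_sum, Cgeom; simpl; Cring.
  - induction b as [|b IHb].
    + replace (S a * Mseq m N + 0)%nat with (a * Mseq m N + Mseq m N)%nat by ring.
      rewrite IHa, Cgeom_S, Cgeom_sum_S by lia; simpl Cpow.
      change (Dir_sum m 0 x) with Defs.C0; change (INR 0) with 0; Cring.
    + replace (S a * Mseq m N + S b)%nat with (S (S a * Mseq m N + b)) by ring.
      rewrite Dir_sum_S, IHb by lia.
      replace (S (S a * Mseq m N + b)) with (S a * Mseq m N + S b)%nat by ring.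
      rewrite Dir_split, (Dir_sum_S m b), S_INR by lia; Cring.
Qed.

Lemma rchar_pow_m N : Cpow (rchar m N x) (m N) = Defs.C1.
Proof.
  unfold rchar; rewrite Cpow_cos_sin.
  assert (0 < INR (m N)) by (apply lt_0_INR; pose proof (hm2 N); lia).
  replace (INR (m N) * (2 * PI * INR (x N) / INR (m N))) with (0 + 2 * INR (x N) * PI)
    by (field; lra).
  now rewrite cos_period, sin_period, cos_0, sin_0.
Qed.

Lemma rchar_neq_C1 N : (0 < x N < m N)%nat -> rchar m N x <> Defs.C1.
Proof.
  intros Hx E; unfold rchar, Defs.C1 in E; injection E as Ecos Esin.
  assert (Hm : 0 < INR (m N)) by (apply lt_0_INR; lia).
  assert (Hx0 : 0 < INR (x N)) by (apply lt_0_INR; lia).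
  assert (HxN : INR (x N) < INR (m N)) by (apply lt_INR; lia).
  set (t := 2 * PI * INR (x N) / INR (m N)) in *.
  pose proof PI_RGT_0 as Hpi.
  assert (Ht0 : 0 < t) by (unfold t; apply Rdiv_lt_0_compat; nra).
  assert (Ht1 : t < 2 * PI).
  { unfold t; replace (2 * PI) with (2 * PI * INR (m N) / INR (m N)) at 2 by (field; lra).
    unfold Rdiv; apply Rmult_lt_compat_r; [apply Rinv_0_lt_compat|]; nra. }
  destruct (Rtotal_order t PI) as [Hlt|[Heq|Hgt]].
  - pose proof (sin_gt_0 t Ht0 Hlt); lra.
  - rewrite Heq, cos_PI in Ecos; lra.
  - pose proof (sin_lt_0 t Hgt Ht1); lra.
Qed.

Lemma Dir_Mseq_S N :
  Dir m (Mseq m (S N)) x = Cmul (Cgeom (rchar m N x) (m N)) (Dir m (Mseq m N) x).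
Proof.
  pose proof (hm2 N).
  replace (Mseq m (S N)) with ((m N - 1) * Mseq m N + Mseq m N)%nat by (simpl; nia).
  rewrite Dir_split by lia.
  replace (Cgeom (rchar m N x) (m N)) with (Cgeom (rchar m N x) (S (m N - 1))) by (f_equal; lia).
  rewrite Cgeom_S; Cring.
Qed.

Lemma psi_prefix_zero N : (forall k, (k < N)%nat -> x k = 0%nat) ->
  forall j, (j < Mseq m N)%nat -> psi m j x = Defs.C1.
Proof.
  intros Hz j Hj; rewrite (psi_as_Cprod j x N Hj), (Cprod_tail _ N 0); [reflexivity|].
  intros k _; unfold psi_factor.
  destruct (Nat.lt_ge_cases k N) as [Hk|Hk].
  - unfold rchar; rewrite (Hz k Hk), Rmult_0_r, Rdiv_0_l, cos_0, sin_0; apply Cpow_C1.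
  - rewrite digit_small; [reflexivity|]. pose proof (Mseq_mono N k Hk); lia.
Qed.

Hypothesis hx : inGm m x.

Lemma Dir_Mseq_cases N :
  Dir m (Mseq m N) x = Defs.C0 \/ (forall k, (k < N)%nat -> x k = 0%nat).
Proof.
  induction N as [|N IH]; [right; intros; lia|].
  rewrite Dir_Mseq_S.
  destruct (Nat.eq_dec (x N) 0) as [Hx0|Hx0].
  - destruct IH as [IH|IH]; [left; rewrite IH; Cring|].
    right; intros k Hk; destruct (Nat.eq_dec k N) as [->|]; [exact Hx0 | apply IH; lia].
  - left; rewrite Cgeom_root_of_unity; [Cring | apply rchar_pow_m |].
    apply rchar_neq_C1; pose proof (hx N); lia.
Qed.

Lemma Mseq_Cnorm_Dir_le N :
  INR (Mseq m N) * Cnorm (Dir m (Mseq m N) x) <= 2 * Cnorm (Dir_sum m (Mseq m N) x).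
Proof.
  destruct (Dir_Mseq_cases N) as [Hzero|Hprefix].
  - rewrite Hzero, Cnorm_C0; pose proof (Cnorm_ge0 (Dir_sum m (Mseq m N) x)); lra.
  - assert (HD : forall j, (j <= Mseq m N)%nat -> Dir m j x = Complex.RtoC (INR j)).
    { induction j as [|j IH]; intros Hj; [reflexivity|].
      rewrite Dir_S, IH, (psi_prefix_zero N Hprefix j), S_INR by lia; Cring. }
    assert (HT : forall j, (j <= Mseq m N)%nat ->
               Dir_sum m j x = Complex.RtoC (INR j * (INR j + 1) / 2)).
    { induction j as [|j IH]; intros Hj.
      - unfold Dir_sum; simpl; rewrite <- RtoC_0; f_equal; field.
      - rewrite Dir_sum_S, IH, HD, <- RtoC_add, S_INR by lia.
        f_equal; field. }
    rewrite HD, HT, !Cnorm_RtoC by lia.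
    pose proof (pos_INR (Mseq m N)); rewrite !Rabs_right; nra.
Qed.

Variable B : nat.
Hypothesis hB : forall k, (m k <= B)%nat.

Lemma Dir_sum_step N n : (n < Mseq m (S N))%nat ->
  Cnorm (Dir_sum m n x)
    <= (2 * INR B * INR B + 3 * INR B) * Cnorm (Dir_sum m (Mseq m N) x)
       + Cnorm (Dir_sum m (n mod Mseq m N) x).
Proof.
  intros Hn; change (n < m N * Mseq m N)%nat in Hn.
  pose proof (Mseq_pos N) as HM.
  pose proof (Nat.div_mod_eq n (Mseq m N)) as Hdiv.
  assert (Ha : (n / Mseq m N < m N)%nat) by (apply Nat.Div0.div_lt_upper_bound; lia).
  assert (Hb : (n mod Mseq m N < Mseq m N)%nat) by (apply Nat.mod_upper_bound; lia).
  set (M := Mseq m N) in *; set (a := (n / M)%nat) in *; set (b := (n mod M)%nat) in *.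
  replace n with (a * M + b)%nat at 1 by lia.
  unfold M; rewrite Dir_sum_split by lia; fold M.
  set (r := rchar m N x).
  assert (Hr : Cnorm r = 1) by apply Cnorm_rchar.
  pose proof (Cnorm_Cgeom_comb_le r a M b Hr ltac:(lia)) as Hcoef.
  pose proof (Cnorm_Cgeom_le r a Hr) as Hgeom.
  pose proof (Mseq_Cnorm_Dir_le N) as HDM; fold M in HDM.
  assert (HaB : INR a <= INR B) by (apply le_INR; specialize (hB N); lia).
  pose proof (pos_INR a); pose proof (pos_INR M).
  pose proof (Cnorm_ge0 (Dir m M x)); pose proof (Cnorm_ge0 (Dir_sum m M x)).
  eapply Rle_trans; [apply Cnorm_triangle|].
  eapply Rle_trans; [apply Rplus_le_compat_r, Cnorm_triangle|].
  rewrite !Cnorm_mul, (Cnorm_Cpow_unit r a Hr).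
  set (coef := Cadd (Cscal (INR M) (Cgeom_sum r a)) (Cscal (INR b) (Cgeom r a))) in *.
  assert (Hfirst : Cnorm coef * Cnorm (Dir m M x)
                   <= (INR a * INR a + INR a) * (2 * Cnorm (Dir_sum m M x))).
  { apply Rle_trans with ((INR a * INR a + INR a) * (INR M * Cnorm (Dir m M x))); [|nra].
    pose proof (Cnorm_ge0 coef); nra. }
  assert (Hsecond : Cnorm (Cgeom r a) * Cnorm (Dir_sum m M x) <= INR a * Cnorm (Dir_sum m M x))
    by (apply Rmult_le_compat_r; assumption).
  assert (Hconst : 2 * (INR a * INR a + INR a) + INR a <= 2 * INR B * INR B + 3 * INR B) by nra.
  nra.
Qed.

Lemma Cnorm_Dir_sum_le N n : (n < Mseq m (S N))%nat ->
  Cnorm (Dir_sum m n x)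
    <= (2 * INR B * INR B + 3 * INR B)
       * sum_f_R0 (fun j => INR (Mseq m j) * Cnorm (Fejer m (Mseq m j) x)) N.
Proof.
  revert n; induction N as [|N IH]; intros n Hn; cbn [sum_f_R0];
    rewrite INR_mul_Cnorm_Fejer by apply Mseq_pos.
  - pose proof (Dir_sum_step 0 n Hn) as Hstep.
    change (Mseq m 0) with 1%nat in Hstep |- *.
    rewrite Nat.mod_1_r in Hstep; change (Dir_sum m 0 x) with Defs.C0 in Hstep.
    rewrite Cnorm_C0 in Hstep; lra.
  - pose proof (Dir_sum_step (S N) n Hn) as Hstep.
    pose proof (IH (n mod Mseq m (S N))%nat
                  ltac:(apply Nat.mod_upper_bound; pose proof (Mseq_pos (S N)); lia)).
    lra.
Qed.

End Vilenkin.

(** * Nörlund means *)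

Lemma Qs_bounds (q : nat -> R) n :
  (forall k, 0 <= q k) -> (forall k, q k <= q (S k)) -> 0 < q 0%nat ->
  0 < q n <= Qs q (S n).
Proof.
  intros Hnn Hmono Hq0.
  assert (0 <= Qs q n) by (unfold Qs; induction n as [|n IH]; simpl; [lra|pose proof (Hnn n); lra]).
  pose proof (growing_prop q n 0 Hmono ltac:(lia)).
  unfold Qs in *; simpl; lra.
Qed.

Lemma Cnorm_Norlund_le m q n x A :
  (forall k, 0 <= q k) -> (forall k, q k <= q (S k)) -> 0 < q 0%nat -> (1 <= n)%nat ->
  (forall j, (j <= n)%nat -> Cnorm (Dir_sum m j x) <= A) ->
  Cnorm (Norlund m q n x) <= q (n - 1)%nat / Qs q n * A.
Proof.
  intros Hnn Hmono Hq0 Hn HA.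
  destruct n as [|n]; [lia|].
  destruct (Qs_bounds q n Hnn Hmono Hq0) as [Hqn HQ].
  unfold Norlund; rewrite Cnorm_scal, Rabs_right by (left; apply Rinv_0_lt_compat; lra).
  replace (q (S n - 1)%nat / Qs q (S n) * A) with (/ Qs q (S n) * (q (S n - 1)%nat * A))
    by (unfold Rdiv; ring).
  apply Rmult_le_compat_l; [left; apply Rinv_0_lt_compat; lra|].
  apply (Cnorm_abel_le (fun k => q (S n - S k)%nat) (fun j => Dir_sum m j x)); auto.
  intros k; apply Rge_le, growing_prop; [exact Hmono | lia].
Qed.

Lemma Norlund_ratio_le (q : nat -> R) :
  (forall k, 0 <= q k) -> (forall k, q k <= q (S k)) -> 0 < q 0%nat ->
  (exists C0 N0, forall n, (N0 <= n)%nat -> Rabs (q (n - 1)%nat / Qs q n) <= C0 / INR n) ->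
  exists c, 0 < c /\ forall n, (1 <= n)%nat -> q (n - 1)%nat / Qs q n <= c / INR n.
Proof.
  intros Hnn Hmono Hq0 [C0 [N0 HO]].
  set (c := Rmax 1 (Rmax C0 (INR N0))).
  assert (Hc1 : 1 <= c) by apply Rmax_l.
  assert (HcC0 : C0 <= c) by (eapply Rle_trans; [apply Rmax_l | apply Rmax_r]).
  assert (HcN0 : INR N0 <= c) by (eapply Rle_trans; [apply Rmax_r | apply Rmax_r]).
  exists c; split; [lra|]; intros n Hn.
  assert (Hnpos : 0 < INR n) by (apply lt_0_INR; lia).
  destruct (Nat.le_gt_cases N0 n) as [Hle|Hlt].
  - eapply Rle_trans; [apply Rle_abs|]; eapply Rle_trans; [apply (HO n Hle)|].
    unfold Rdiv; apply Rmult_le_compat_r; [left; apply Rinv_0_lt_compat|]; lra.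
  - destruct n as [|n]; [lia|]; replace (S n - 1)%nat with n by lia.
    destruct (Qs_bounds q n Hnn Hmono Hq0) as [Hqn HQ].
    assert (INR (S n) <= INR N0) by (apply le_INR; lia).
    apply Rle_trans with 1.
    + apply Rmult_le_reg_r with (Qs q (S n)); [lra|].
      unfold Rdiv; rewrite Rmult_assoc, Rinv_l; lra.
    + apply Rmult_le_reg_r with (INR (S n)); [lra|].
      unfold Rdiv; rewrite Rmult_assoc, Rinv_l; lra.
Qed.

Theorem mainTheorem4
  (m : nat -> nat)
  (hm2 : forall k, (2 <= m k)%nat)
  (hmb : exists B, forall k, (m k <= B)%nat)
  (q : nat -> R)
  (hqnn : forall k, 0 <= q k)
  (hqmono : forall k, q k <= q (S k))
  (hq0 : 0 < q 0%nat)
  (hO : exists C0 : R, exists N0 : nat, forall n : nat, (N0 <= n)%nat ->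
          Rabs (q (n - 1)%nat / Qs q n) <= C0 / INR n) :
  exists c : R, 0 < c /\
    forall (n : nat) (x : nat -> nat) (N : nat),
      (1 <= n)%nat -> inGm m x ->
      (Mseq m N <= n < Mseq m (S N))%nat ->
      Cnorm (Norlund m q n x)
        <= c / INR n * sum_f_R0 (fun j => INR (Mseq m j) * Cnorm (Fejer m (Mseq m j) x)) N.
Proof.
  destruct hmb as [B hB].
  destruct (Norlund_ratio_le q hqnn hqmono hq0 hO) as [c [Hc Hratio]].
  assert (HB : 2 <= INR B).
  { replace 2 with (INR 2) by reflexivity; apply le_INR.
    specialize (hm2 0%nat); specialize (hB 0%nat); lia. }
  set (K := 2 * INR B * INR B + 3 * INR B).
  exists (K * c); split; [unfold K; nra|].
  intros n x N Hn hx [_ HnN].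
  set (Sigma := sum_f_R0 (fun j => INR (Mseq m j) * Cnorm (Fejer m (Mseq m j) x)) N).
  assert (HSigma : 0 <= Sigma).
  { apply cond_pos_sum; intros; apply Rmult_le_pos; [apply pos_INR | apply Cnorm_ge0]. }
  eapply Rle_trans.
  { apply (Cnorm_Norlund_le m q n x (K * Sigma)); auto.
    intros j Hj; apply (Cnorm_Dir_sum_le m hm2 x hx B hB N j); lia. }
  replace (K * c / INR n * Sigma) with (c / INR n * (K * Sigma)) by (unfold Rdiv; ring).
  apply Rmult_le_compat_r; [unfold K; nra | apply Hratio, Hn].
Qed.
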